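(* Let $\lambda$ be Lebesgue measure on $[0,1]$ and let $T:[0,1]\to[0,1]$ be an invertible, ergodic, $\lambda$-preserving transformation which is rigid rank 1 (in the sense defined in the context), with associated numbers $n_k$ and sets $A_k$. Define $$\mathcal{R}_k=\bigcup_{i=0}^{n_k-1}T^iA_k,\qquad \hat{\mathcal{R}}_k=\bigcup_{i=0}^{n_k-1}T^i\big(A_k\cap T^{-n_k}A_k\cap T^{n_k}A_k\big),$$ $$\tilde{\mathcal{R}}_k=\bigcup_{i=0}^{n_k-1}T^i\big(A_k\cap T^{-n_k}A_k\cap T^{-2n_k}A_k\cap T^{n_k}A_k\cap T^{2n_k}A_k\big).$$ Then $$\lim_{k\to\infty}\lambda(\tilde{\mathcal{R}}_k)=\lim_{k\to\infty}\lambda(\mathcal{R}_k)=\lim_{k\to\infty}\lambda(\hat{\mathcal{R}}_k)=1.$$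
   Context: $T$ is called rigid rank 1 if there exist positive integers $n_j$ and measurable sets $A_j\subset[0,1]$ such that: (1) $\lim_{j\to\infty}\lambda\big(\bigcup_{i=0}^{n_j-1}T^iA_j\big)=1$; (2) the sets $A_j,TA_j,\dots,T^{n_j-1}A_j$ are pairwise disjoint; (3) $\lim_{j\to\infty}\lambda(T^{n_j}A_j\cap A_j)/\lambda(A_j)=1$; (4) for every $\varepsilon>0$ there exist, for each $j$, metric balls $B^{(j)}_0,\dots,B^{(j)}_{n_j-1}\subset[0,1]$ of diameter at most $\varepsilon$ such that $\lim_{j\to\infty}\sum_{i=0}^{n_j-1}\lambda(T^iA_j\setminus B^{(j)}_i)=0$. *)

From HB Require Import structures.
From mathcomp Require Import all_boot all_order all_algebra.
From mathcomp Require Import all_classical all_reals all_analysis.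
Set Implicit Arguments. Unset Strict Implicit. Unset Printing Implicit Defensive.
Import Order.TTheory GRing.Theory Num.Theory.
Import numFieldNormedType.Exports.
Local Open Scope classical_set_scope.
Local Open Scope ring_scope.

Definition I01 {R : realType} : set R := `[0%R, 1%R].

Notation lam := (@lebesgue_measure _).

Definition fimg {R : realType} (T : R -> R) (i : nat) (A : set R) : set R :=
  iter i T @` A.

Definition bimg {R : realType} (T : R -> R) (i : nat) (A : set R) : set R :=
  I01 `&` (iter i T @^-1` A).

Definition invertible_mp_ergodic {R : realType} (T : R -> R) : Prop :=
  [/\ set_bij I01 I01 T,
      measurable_fun I01 T,
      (forall A : set R, measurable A -> A `<=` I01 -> measurable (T @` A)),
      (forall A : set R, measurable A -> A `<=` I01 ->
          lam (bimg T 1 A) = lam A) &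
      (forall A : set R, measurable A -> A `<=` I01 -> bimg T 1 A = A ->
          lam A = 0%E \/ lam A = 1%E)].

Definition rigid_rank1_data {R : realType} (T : R -> R)
    (n : nat -> nat) (A : nat -> set R) : Prop :=
  [/\ (forall j, [/\ (0 < n j)%N, measurable (A j) & A j `<=` I01]),
      (fun j => lam (\bigcup_(i in `I_(n j)) fimg T i (A j))) @ \oo --> 1%E,
      (forall j i k, (i < k)%N -> (k < n j)%N ->
          fimg T i (A j) `&` fimg T k (A j) = set0),
      (fun j => fine (lam (fimg T (n j) (A j) `&` A j)) / fine (lam (A j)))
          @ \oo --> (1 : R) &
      (forall eps : R, 0 < eps ->
         exists (c r : nat -> nat -> R),
           (forall j i, 2 * r j i <= eps) /\
           (fun j => (\sum_(0 <= i < n j)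
                        lam (fimg T i (A j) `\` ball (c j i) (r j i)))%E)
             @ \oo --> 0%E)].

Definition calR {R : realType} (T : R -> R) (n : nat -> nat) (A : nat -> set R)
  (k : nat) : set R := \bigcup_(i in `I_(n k)) fimg T i (A k).

Definition hatR {R : realType} (T : R -> R) (n : nat -> nat) (A : nat -> set R)
  (k : nat) : set R :=
  \bigcup_(i in `I_(n k))
     fimg T i (A k `&` bimg T (n k) (A k) `&` fimg T (n k) (A k)).

Definition tildeR {R : realType} (T : R -> R) (n : nat -> nat) (A : nat -> set R)
  (k : nat) : set R :=
  \bigcup_(i in `I_(n k))
     fimg T i (A k `&` bimg T (n k) (A k) `&` bimg T (2 * n k)%N (A k)
                   `&` fimg T (n k) (A k) `&` fimg T (2 * n k)%N (A k)).

From HB Require Import structures.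
From mathcomp Require Import all_boot all_order all_algebra.
From mathcomp Require Import all_classical all_reals all_analysis.
From mathcomp Require Import lra.
Import Order.TTheory GRing.Theory Num.Theory.
Import numFieldNormedType.Exports.
Local Open Scope classical_set_scope.
Local Open Scope ring_scope.

(* Let e = λ(A ∖ TⁿA).  As T preserves λ, discarding the points of A outside
   T⁻ⁿA costs e, and discarding those outside T²ⁿA costs at most 2e, because
   A ∖ T²ⁿA ⊆ (A ∖ TⁿA) ∪ Tⁿ(A ∖ TⁿA).  So the bases of the hatted and tilded
   towers miss at most 2e resp. 6e of A, and the towers at most n times that.
   The full tower is disjoint, hence n λ(A) ≤ 1 and n e = n λ(A) (1 - r) ≤ 1 - r
   with r = λ(TⁿA ∩ A) / λ(A), which tends to 1 by rigidity. *)

Section iterated_images.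
Context {R : realType} (T : R -> R).
Implicit Types (B C : set R) (m h : nat).

Definition tower h B := \bigcup_(i < h) fimg T i B.

Definition hat_base m B := B `&` bimg T m B `&` fimg T m B.

Definition tilde_base m B :=
  B `&` bimg T m B `&` bimg T (2 * m)%N B `&` fimg T m B `&` fimg T (2 * m)%N B.

Lemma fimg0 B : fimg T 0 B = B.
Proof. exact: image_id. Qed.

Lemma fimgS m B : fimg T m.+1 B = T @` fimg T m B.
Proof. by rewrite /fimg image_comp. Qed.

Lemma fimg_setI_bimg m B : B `<=` I01 ->
  fimg T m (B `&` bimg T m B) = fimg T m B `&` B.
Proof.
move=> BI; apply/seteqP; split => y.
  by case=> x [Bx [_ /= Bmx]] <-; split => //; exists x.
by case=> -[x Bx <-] Bmx; exists x => //; split => //; split => //; apply: BI.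
Qed.

Lemma setD_fimg_double m B :
  B `\` fimg T (2 * m)%N B `<=` (B `\` fimg T m B) `|` fimg T m (B `\` fimg T m B).
Proof.
move=> x [Bx B2mx]; have [[y By yx]|] := pselect (fimg T m B x); last by left.
right; exists y => //; split => // -[z Bz zy]; apply: B2mx; exists z => //.
by rewrite mul2n -addnn iterD zy.
Qed.

Lemma subset_tower h B C : C `<=` B -> tower h C `<=` tower h B.
Proof. by move=> CB; apply: subset_bigcup => i _; apply: image_subset. Qed.

Lemma tower_setD h B C : tower h B `<=` tower h C `|` tower h (B `\` C).
Proof.
move=> _ [i hi [x Bx <-]].
by have [Cx|nCx] := pselect (C x); [left|right]; exists i => //; exists x.
Qed.

End iterated_images.

Section lebesgue_unit_interval.
Context {R : realType}.
Implicit Types X : set R.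

Lemma measurable_I01 : measurable (@I01 R).
Proof. exact: measurable_itv. Qed.

Lemma lam_I01 : lam (@I01 R) = 1%E.
Proof. by rewrite /I01 lebesgue_measure_itv /= lte_fin ltr01 /= oppr0 adde0. Qed.

Lemma lam_le1 X : measurable X -> X `<=` I01 -> (lam X <= 1)%E.
Proof. by move=> mX XI; rewrite -lam_I01 le_measure ?inE //; exact: measurable_I01. Qed.

Lemma lam_lty X : measurable X -> X `<=` I01 -> (lam X < +oo)%E.
Proof. by move=> mX XI; rewrite (le_lt_trans (lam_le1 _ mX XI)) ?ltry. Qed.

Lemma lamE X : measurable X -> X `<=` I01 -> lam X = (fine (lam X))%:E.
Proof.
by move=> mX XI; rewrite fineK // ge0_fin_numE ?measure_ge0 ?lam_lty.
Qed.

End lebesgue_unit_interval.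

Section measure_preserving.
Context {R : realType} {T : R -> R}.
Hypotheses (T_bij : set_bij I01 I01 T) (T_meas : measurable_fun I01 T).
Hypothesis T_image : forall B, measurable B -> B `<=` I01 -> measurable (T @` B).
Hypothesis T_preserves : forall B, measurable B -> B `<=` I01 ->
  lam (bimg T 1 B) = lam B.
Implicit Types (B C : set R) (m h : nat).

Lemma iter_I01 m x : I01 x -> I01 (iter m T x).
Proof. by case: T_bij => T_fun _ _ xI; elim: m => //= m; exact: T_fun. Qed.

Lemma fimg_sub_I01 m B : B `<=` I01 -> fimg T m B `<=` I01.
Proof. by move=> BI _ [x /BI xI <-]; exact: iter_I01. Qed.

Lemma measurable_fimg m B : measurable B -> B `<=` I01 -> measurable (fimg T m B).
Proof.
move=> mB BI; elim: m => [|m IH]; first by rewrite fimg0.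
by rewrite fimgS; apply: T_image => //; exact: fimg_sub_I01.
Qed.

Lemma bimgS m B : bimg T m.+1 B = bimg T m (bimg T 1 B).
Proof.
apply/seteqP; split => x [xI] /=; last by case.
by move=> Bx; split => //; split => //; exact: iter_I01.
Qed.

Lemma measurable_bimg m B : measurable B -> measurable (bimg T m B).
Proof.
elim: m B => [|m IH] B mB; first exact: measurableI measurable_I01 mB.
by rewrite bimgS; apply: IH; exact: T_meas measurable_I01 _ mB.
Qed.

Lemma lam_image B : measurable B -> B `<=` I01 -> lam (T @` B) = lam B.
Proof.
case: T_bij => T_fun T_inj _ mB BI.
have preimB : bimg T 1 (T @` B) = B.
  apply/seteqP; split => [x [xI [y By yx]]|x Bx]; last by split; [exact: BI|exists x].
  by rewrite -(T_inj y x) // inE //; exact: BI.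
rewrite -[in RHS]preimB T_preserves //; first exact: T_image.
by move=> _ [x Bx <-]; exact: T_fun (BI _ Bx).
Qed.

Lemma lam_fimg m B : measurable B -> B `<=` I01 -> lam (fimg T m B) = lam B.
Proof.
move=> mB BI; elim: m => [|m IH]; first by rewrite fimg0.
by rewrite fimgS lam_image //; [exact: measurable_fimg | exact: fimg_sub_I01].
Qed.

Lemma tower_sub_I01 h B : B `<=` I01 -> tower T h B `<=` I01.
Proof. by move=> BI; apply: bigcup_sub => i _; exact: fimg_sub_I01. Qed.

Lemma measurable_tower h B : measurable B -> B `<=` I01 -> measurable (tower T h B).
Proof. by move=> mB BI; apply: bigcup_measurable => i _; exact: measurable_fimg. Qed.

Lemma lam_tower_le h B : measurable B -> B `<=` I01 ->
  (lam (tower T h B) <= lam B *+ h)%E.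
Proof.
move=> mB BI.
rewrite (le_trans (content_subadditive lam (A := tower T h B)
  (F := fun i => fimg T i B) (n := h) _ _ _)) //.
- by move=> i _; exact: measurable_fimg.
- exact: measurable_tower.
- by rewrite /tower bigcup_mkord.
- by rewrite (eq_bigr (fun=> lam B)) ?sumr_const ?card_ord // => i _; exact: lam_fimg.
Qed.

Lemma lam_tower h B : measurable B -> B `<=` I01 ->
  (forall i k, (i < k)%N -> (k < h)%N -> fimg T i B `&` fimg T k B = set0) ->
  lam (tower T h B) = (lam B *+ h)%E.
Proof.
move=> mB BI disj; rewrite /tower bigcup_mkord.
rewrite (@measure_bigsetU_ord _ _ _ lam h xpredT (fun i : 'I_h => fimg T i B)).
- by rewrite (eq_bigr (fun=> lam B)) ?sumr_const ?card_ord // => i _; exact: lam_fimg.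
- by move=> i; exact: measurable_fimg.
move=> i k _ _ [x ikx]; apply: val_inj; case: (ltngtP i k) => // [ik|ki].
  by move: ikx; rewrite disj ?ik ?ltn_ord.
by move: ikx; rewrite setIC disj ?ki ?ltn_ord.
Qed.

Lemma lam_tower_setD h B C : measurable B -> B `<=` I01 -> measurable C ->
  C `<=` B -> (lam (tower T h B) <= lam (tower T h C) + lam (B `\` C) *+ h)%E.
Proof.
move=> mB BI mC CB; have CI : C `<=` I01 by move=> x /CB /BI.
have mBC : measurable (B `\` C) by exact: measurableD.
have BCI : B `\` C `<=` I01 by move=> x [/BI].
have [mtB mtC mtBC] : [/\ measurable (tower T h B), measurable (tower T h C)
  & measurable (tower T h (B `\` C))] by split; exact: measurable_tower.
apply: le_trans (le_measure lam _ _ (tower_setD T h B C)) _; rewrite ?inE //.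
  exact: measurableU.
by apply: le_trans (measureU2 lam mtC mtBC) _; apply: leeD => //; exact: lam_tower_le.
Qed.

Section return_defect.
Variable A : set R.
Hypotheses (mA : measurable A) (AI : A `<=` I01).

Let measurable_setD_fimg m : measurable (A `\` fimg T m A).
Proof. by apply: measurableD => //; exact: measurable_fimg. Qed.

Let measurable_setD_bimg m : measurable (A `\` bimg T m A).
Proof. by apply: measurableD => //; exact: measurable_bimg. Qed.

Lemma lam_setD_bimg m : lam (A `\` bimg T m A) = lam (A `\` fimg T m A).
Proof.
have mAb : measurable (A `&` bimg T m A).
  by apply: measurableI => //; exact: measurable_bimg.
have AbI : A `&` bimg T m A `<=` I01 by move=> x [/AI].
have lamI : lam (A `&` bimg T m A) = lam (A `&` fimg T m A).
  by rewrite -(lam_fimg m _ mAb AbI) fimg_setI_bimg // setIC.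
rewrite !measureD ?lam_lty //; [|exact: measurable_fimg|exact: measurable_bimg].
by congr (_ - _)%E; exact: lamI.
Qed.

Lemma lam_setD_fimg_double m :
  (lam (A `\` fimg T (2 * m)%N A) <= lam (A `\` fimg T m A) *+ 2)%E.
Proof.
have DI : A `\` fimg T m A `<=` I01 by move=> x [/AI].
have mTD := measurable_fimg m _ (measurable_setD_fimg m) DI.
apply: le_trans (le_measure lam _ _ (setD_fimg_double T m A)) _; rewrite ?inE //;
  [exact: measurable_setD_fimg | exact: measurableU (measurable_setD_fimg m) mTD |].
apply: le_trans (measureU2 lam (measurable_setD_fimg m) mTD) _.
by rewrite mule2n; apply: leeD => //; rewrite -(lam_fimg m _ (measurable_setD_fimg m) DI).
Qed.

Lemma lam_setD_hat_base m :
  (lam (A `\` hat_base T m A) <= lam (A `\` fimg T m A) *+ 2)%E.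
Proof.
rewrite /hat_base 2!setDIr setDv set0U.
apply: le_trans (measureU2 lam (measurable_setD_bimg m) (measurable_setD_fimg m)) _.
by rewrite mule2n; apply: leeD => //; rewrite -lam_setD_bimg.
Qed.

Lemma lam_setD_tilde_base m :
  (lam (A `\` tilde_base T m A) <= lam (A `\` fimg T m A) *+ 6)%E.
Proof.
rewrite /tilde_base 4!setDIr setDv set0U; set e := lam (A `\` fimg T m A).
have mDb := measurable_setD_bimg; have mDf := measurable_setD_fimg.
have mDbb := measurableU _ _ (mDb m) (mDb (2 * m)%N).
apply: le_trans (measureU2 lam (measurableU _ _ mDbb (mDf m)) (mDf (2 * m)%N)) _.
apply: le_trans (leeD (measureU2 lam mDbb (mDf m)) (lexx _)) _.
apply: le_trans (leeD (leeD (measureU2 lam (mDb m) (mDb (2 * m)%N)) (lexx _)) (lexx _)) _.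
have -> : (e *+ 6 = e + e *+ 2 + e + e *+ 2)%E by rewrite !muleS mule0n !adde0 !addeA.
have le_double := lam_setD_fimg_double m.
apply: leeD; first apply: leeD; first apply: leeD.
- by rewrite /e -lam_setD_bimg.
- by apply: le_trans le_double; rewrite -lam_setD_bimg.
- by [].
- exact: le_double.
Qed.

Lemma measurable_hat_base m : measurable (hat_base T m A).
Proof.
have mb := measurable_bimg m _ mA; have mf := measurable_fimg m _ mA AI.
by do 2 apply: measurableI => //.
Qed.

Lemma measurable_tilde_base m : measurable (tilde_base T m A).
Proof.
have mb k := measurable_bimg k _ mA; have mf k := measurable_fimg k _ mA AI.
by do 4 apply: measurableI => //.
Qed.

End return_defect.

Lemma rigidity_defect_le h A : measurable A -> A `<=` I01 ->
  (forall i k, (i < k)%N -> (k < h)%N -> fimg T i A `&` fimg T k A = set0) ->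
  h%:R * fine (lam (A `\` fimg T h A)) <=
    1 - fine (lam (fimg T h A `&` A)) / fine (lam A).
Proof.
move=> mA AI disj; set a := fine (lam A); set b := fine (lam (fimg T h A `&` A)).
have mfA := measurable_fimg h _ mA AI.
have mI : measurable (fimg T h A `&` A) by exact: measurableI.
have II : fimg T h A `&` A `<=` I01 by move=> x [_ /AI].
have b_ge0 : 0 <= b by exact/fine_ge0/measure_ge0.
have b_le_a : b <= a.
  by rewrite -lee_fin -!lamE //; apply: le_measure; rewrite ?inE // => x [].
have defect : fine (lam (A `\` fimg T h A)) = a - b.
  apply: EFin_inj; rewrite EFinB -!lamE //; last by move=> x [/AI].
    by rewrite measureD ?lam_lty // setIC.
  by apply: measurableD.
have tower_le1 : h%:R * a <= 1.
  rewrite -lee_fin mulr_natl EFin_natmul -lamE // -lam_tower //.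
  by apply: lam_le1; [exact: measurable_tower | exact: tower_sub_I01].
have [a0|a_neq0] := eqVneq a 0.
  (* the ratio is then the junk value 0 / 0 = 0 *)
  have b0 : b = 0 by apply/eqP; rewrite eq_le b_ge0 -a0 b_le_a.
  by rewrite defect a0 b0 subrr mulr0 mul0r subr0 ler01.
have a_gt0 : 0 < a by rewrite lt_def a_neq0 fine_ge0 ?measure_ge0.
rewrite defect (_ : a - b = a * (1 - b / a)); last first.
  by rewrite mulrBr mulr1 mulrCA divff // mulr1.
by rewrite mulrA ler_piMl // subr_ge0 ler_pdivrMr // mul1r.
Qed.

Lemma tower_lower_bound h A B (c : nat) : measurable A -> A `<=` I01 ->
  (forall i k, (i < k)%N -> (k < h)%N -> fimg T i A `&` fimg T k A = set0) ->
  measurable B -> B `<=` A ->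
  (lam (A `\` B) <= lam (A `\` fimg T h A) *+ c)%E ->
  fine (lam (tower T h A))
      - c%:R * (1 - fine (lam (fimg T h A `&` A)) / fine (lam A))
    <= fine (lam (tower T h B)).
Proof.
move=> mA AI disj mB BA defect_le; have BI : B `<=` I01 by move=> x /BA /AI.
have rigidity := rigidity_defect_le h A mA AI disj.
have cover := lam_tower_setD h A B mA AI mB BA.
have sub_setD X : A `\` X `<=` I01 by move=> x [/AI].
have lam_tA := lamE _ (measurable_tower h A mA AI) (tower_sub_I01 h A AI).
have lam_tB := lamE _ (measurable_tower h B mB BI) (tower_sub_I01 h B BI).
have lam_d := lamE _ (measurableD mA mB) (sub_setD B).
have lam_e := lamE _ (measurableD mA (measurable_fimg h A mA AI)) (sub_setD _).
rewrite lam_tA lam_tB lam_d -EFin_natmul -EFinD lee_fin -mulr_natl in cover.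
rewrite lam_d lam_e -EFin_natmul lee_fin -mulr_natl in defect_le.
have : h%:R * fine (lam (A `\` B)) <=
    c%:R * (1 - fine (lam (fimg T h A `&` A)) / fine (lam A)).
  apply: le_trans (ler_wpM2l (ler0n _ _) defect_le) _.
  by rewrite mulrCA; apply: ler_wpM2l.
lra.
Qed.

Lemma lam_tower_cvg1 {n A} (B : nat -> set R) (c : nat) :
  rigid_rank1_data T n A ->
  (forall k, measurable (B k) /\ B k `<=` A k) ->
  (forall k, (lam (A k `\` B k) <= lam (A k `\` fimg T (n k) (A k)) *+ c)%E) ->
  (fun k => lam (tower T (n k) (B k))) @ \oo --> 1%E.
Proof.
case=> A_props lam_tA_cvg disj ratio_cvg _ B_props defect_le.
have [_ tA_cvg] := (fine_cvgP _ _).1 lam_tA_cvg.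
have tower_props k :
    [/\ measurable (tower T (n k) (A k)), tower T (n k) (A k) `<=` I01,
         measurable (tower T (n k) (B k)) & tower T (n k) (B k) `<=` I01].
  have [_ mA AI] := A_props k; have [mB BA] := B_props k.
  have BI : B k `<=` I01 by move=> x /BA /AI.
  by split; [exact: measurable_tower | exact: tower_sub_I01
            | exact: measurable_tower | exact: tower_sub_I01].
apply/fine_cvgP; split.
  apply: nearW => k; have [_ _ mtB tBI] := tower_props k.
  by rewrite ge0_fin_numE ?measure_ge0 ?lam_lty.
apply: (@squeeze_cvgr _ _ _ _
  (fun k => fine (lam (tower T (n k) (A k))) - c%:R *
     (1 - fine (lam (fimg T (n k) (A k) `&` A k)) / fine (lam (A k))))
  (fun k => fine (lam (tower T (n k) (A k))))).
- apply: nearW => k; have [_ mA AI] := A_props k; have [mB BA] := B_props k.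
  have [mtA tAI mtB tBI] := tower_props k.
  rewrite tower_lower_bound //=; last exact: disj.
  rewrite -lee_fin -!lamE //; apply: le_measure; rewrite ?inE //.
  exact: subset_tower.
- rewrite -[X in _ --> X](subr0 1) -[X in _ - X](mulr0 c%:R) -[X in _ * X](subrr 1).
  by apply: cvgB => //; apply: cvgM; [exact: cvg_cst | apply: cvgB => //; exact: cvg_cst].
- exact: tA_cvg.
Qed.

End measure_preserving.

Theorem mainTheorem1 (R : realType) (T : R -> R) (n : nat -> nat)
    (A : nat -> set R) :
  invertible_mp_ergodic T -> rigid_rank1_data T n A ->
  [/\ (fun k => lam (tildeR T n A k)) @ \oo --> 1%E,
      (fun k => lam (calR T n A k)) @ \oo --> 1%E &
      (fun k => lam (hatR T n A k)) @ \oo --> 1%E].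
Proof.
move=> [T_bij T_meas T_image T_preserves _] data.
have [A_props calR_cvg _ _ _] := data.
split => //.
- apply: (lam_tower_cvg1 T_bij T_image T_preserves
    (fun k => tilde_base T (n k) (A k)) 6 data).
    move=> k; have [_ mA AI] := A_props k.
    by split; [exact: measurable_tilde_base | move=> x [[[[]]]]].
  by move=> k; have [_ mA AI] := A_props k; exact: lam_setD_tilde_base.
- apply: (lam_tower_cvg1 T_bij T_image T_preserves
    (fun k => hat_base T (n k) (A k)) 2 data).
    move=> k; have [_ mA AI] := A_props k.
    by split; [exact: measurable_hat_base | move=> x [[]]].
  by move=> k; have [_ mA AI] := A_props k; exact: lam_setD_hat_base.
Qed.
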